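(* Let $d\ge 2$, $\alpha\in[0,1]$, and let $\rho_W$ be the Werner state on $\mathbb C^d\otimes\mathbb C^d$, \[ \rho_W=\alpha\binom{d+1}{2}^{-1}\Pi_+ + (1-\alpha)\binom{d}{2}^{-1}\Pi_-,\qquad \Pi_\pm=\tfrac12(\mathbb I\pm F), \] where $F=\sum_{i,j=1}^d|i\rangle\langle j|\otimes|j\rangle\langle i|$ is the swap operator. Let $p_n=\mathrm{Tr}[(\rho_W^{T_A})^n]$. Then $p_3<p_2^2$ if and only if $\alpha<1/2$, and this holds if and only if $\rho_W^{T_A}$ has a negative eigenvalue. (Consequently, since $\rho_W$ is separable for $\alpha\ge1/2$, the condition $p_3<p_2^2$ is necessary and sufficient for $\rho_W$ to be entangled.)
   Context: The partial transpose on the first factor $A$ is defined in the computational product basis by $(|k_A,k_B\rangle\langle l_A,l_B|)^{T_A}=|l_A,k_B\rangle\langle k_A,l_B|$. *)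

(* C^d (x) C^d is identified with C^(d*d)
   via the row-major index (i,j) |-> i*d + j  (mxtens_index of real_closed). *)
From HB Require Import structures.
From mathcomp Require Import all_boot all_order all_algebra.
From mathcomp Require Import complex mxtens.
Set Implicit Arguments. Unset Strict Implicit. Unset Printing Implicit Defensive.
Import Order.TTheory GRing.Theory Num.Theory.
Local Open Scope ring_scope.

Section Werner.
Variables (R : rcfType) (d : nat).
Local Notation C := R[i].

Definition kidx (kA kB : 'I_d) : 'I_(d * d) := mxtens_index (kA, kB).

Definition swapF : 'M[C]_(d * d) :=
  \sum_(i < d) \sum_(j < d) (delta_mx i j *t delta_mx j i).

Definition PiPlus : 'M[C]_(d * d) := 2^-1 *: (1%:M + swapF).
Definition PiMinus : 'M[C]_(d * d) := 2^-1 *: (1%:M - swapF).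

Definition werner (alpha : R) : 'M[C]_(d * d) :=
  ((alpha%:C)%C / ('C(d.+1, 2))%:R) *: PiPlus
  + (((1 - alpha)%:C)%C / ('C(d, 2))%:R) *: PiMinus.

Definition ptA (M : 'M[C]_(d * d)) : 'M[C]_(d * d) :=
  \sum_(kA < d) \sum_(kB < d) \sum_(lA < d) \sum_(lB < d)
     M (kidx kA kB) (kidx lA lB) *: delta_mx (kidx lA kB) (kidx kA lB).

Definition pmoment (M : 'M[C]_(d * d)) (n : nat) : C := \tr (ptA M ^+ n).

End Werner.

(* Writing Q for the projector onto the maximally entangled vector
   (1/sqrt d) sum_i |ii>, the partial transpose of the swap operator F is d Q,
   and that of the identity is the identity.  Hence

       rho_W^{T_A} = a (1 - Q) + x Q,   x = (2 alpha - 1) / d,  a >= 0,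

   with a (d^2 - 1) + x = 1 (trace one).  Since Q is an idempotent of trace
   one, p_n = a^n (d^2 - 1) + x^n, and the eigenvalues of rho_W^{T_A} are
   exactly a and x.  The elementary identity
       p_2^2 - p_3 = (d^2 - 1) a (-x) (a - x)^2     (using a (d^2-1) + x = 1)
   shows p_3 < p_2^2 iff x < 0 iff alpha < 1/2, and x < 0 iff some
   eigenvalue is negative. *)
From HB Require Import structures.
From mathcomp Require Import all_boot all_order all_algebra.
From mathcomp Require Import complex mxtens.
From mathcomp Require Import ring lra zify.
Set Implicit Arguments. Unset Strict Implicit. Unset Printing Implicit Defensive.
Import Order.TTheory GRing.Theory Num.Theory.
Local Open Scope ring_scope.

Section IdempotentSplit.
Variables (F : fieldType) (n : nat) (Q : 'M[F]_n).
Hypothesis Q_idem : Q *m Q = Q.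

Definition split_mx (A X : F) : 'M[F]_n := A *: (1%:M - Q) + X *: Q.

Lemma split_mx_pow (A X : F) k :
  split_mx A X ^+ k = split_mx (A ^+ k) (X ^+ k).
Proof.
have QcQ : (1%:M - Q) *m Q = 0 by rewrite mulmxBl mul1mx Q_idem subrr.
have QQc : Q *m (1%:M - Q) = 0 by rewrite mulmxBr mulmx1 Q_idem subrr.
have QcQc : (1%:M - Q) *m (1%:M - Q) = 1%:M - Q by rewrite mulmxBl mul1mx QQc subr0.
elim: k => [|k IH]; first by rewrite !expr0 /split_mx !scale1r subrK.
rewrite exprSr IH -mulmxE /split_mx mulmxDl !mulmxDr -!scalemxAl -!scalemxAr.
by rewrite QcQc QcQ QQc Q_idem !scalerA !scaler0 addr0 add0r !exprSr.
Qed.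

Lemma row_split_mx (u : 'rV[F]_n) A X :
  u *m split_mx A X = A *: (u - u *m Q) + X *: (u *m Q).
Proof. by rewrite /split_mx mulmxDr -!scalemxAr mulmxBr mulmx1. Qed.

Lemma row_split_mx_Q (u : 'rV[F]_n) A X :
  u *m split_mx A X *m Q = X *: (u *m Q).
Proof.
rewrite row_split_mx mulmxDl -!scalemxAl mulmxBl -mulmxA Q_idem subrr.
by rewrite scaler0 add0r.
Qed.

Lemma split_mx_eigenvalue_fixed (u : 'rV[F]_n) A X :
  u != 0 -> u *m Q = u -> eigenvalue (split_mx A X) X.
Proof.
move=> u_neq0 uQ; apply/eigenvalueP; exists u => //.
by rewrite row_split_mx uQ subrr scaler0 add0r.
Qed.

Lemma split_mx_eigenvalue (A X lam : F) :
  eigenvalue (split_mx A X) lam -> lam = A \/ lam = X.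
Proof.
case/eigenvalueP => v hv v_neq0.
have [<-|neqX] := eqVneq X lam; first by right.
have vQ0 : v *m Q = 0.
  have : (X - lam) *: (v *m Q) == 0.
    by rewrite scalerBl -(row_split_mx_Q v A) hv -scalemxAl subrr.
  by rewrite scalemx_eq0 subr_eq0 (negPf neqX) => /eqP.
rewrite row_split_mx vQ0 subr0 scaler0 addr0 in hv.
have : (A - lam) *: v == 0 by rewrite scalerBl hv subrr.
by rewrite scalemx_eq0 (negPf v_neq0) orbF subr_eq0 => /eqP <-; left.
Qed.

End IdempotentSplit.

Section ProductBasis.
Variables (R : rcfType) (d : nat).
Local Notation C := R[i].
Local Notation kidx := (@kidx d).

Lemma kidx_eq (a b c e : 'I_d) : (kidx a b == kidx c e) = (a == c) && (b == e).
Proof. by rewrite /kidx (can_eq (@mxtens_indexK d d)) xpair_eqE. Qed.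

Lemma sum_delta (G : 'I_d -> C) j : \sum_i ((i == j)%:R * G i) = G j.
Proof.
rewrite (bigD1 j) //= eqxx mul1r big1 ?addr0 // => i /negbTE ->; by rewrite mul0r.
Qed.

Lemma sum_kidx (G : 'I_(d * d) -> C) :
  \sum_r G r = \sum_(i < d) \sum_(j < d) G (kidx i j).
Proof.
rewrite pair_big /= (reindex (@mxtens_index d d)) /=; last first.
  by apply: onW_bij; exists (@mxtens_unindex d d);
    [exact: mxtens_indexK | exact: mxtens_unindexK].
by apply: eq_bigr => -[i j].
Qed.

Lemma ptA_entry (M : 'M[C]_(d * d)) x y z w :
  ptA M (kidx x y) (kidx z w) = M (kidx z y) (kidx x w).
Proof.
rewrite /ptA summxE.
transitivity (\sum_(kA < d) (kA == z)%:R * \sum_(kB < d) (kB == y)%:R *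
   \sum_(lA < d) (lA == x)%:R * \sum_(lB < d) (lB == w)%:R *
   M (kidx kA kB) (kidx lA lB)); last by rewrite !sum_delta.
apply: eq_bigr => kA _; rewrite summxE mulr_sumr; apply: eq_bigr => kB _.
rewrite summxE mulrA mulr_sumr; apply: eq_bigr => lA _.
rewrite summxE mulrA mulr_sumr; apply: eq_bigr => lB _.
rewrite !mxE !kidx_eq [lA == x]eq_sym [kB == y]eq_sym [kA == z]eq_sym [lB == w]eq_sym.
by case: (x == lA); case: (y == kB); case: (z == kA); case: (w == lB);
  rewrite /= ?mulr1 ?mulr0 ?mul1r ?mul0r.
Qed.

Lemma swap_entry x y z w :
  swapF R d (kidx x y) (kidx z w) = ((x == w) && (y == z))%:R.
Proof.
rewrite /swapF summxE.
transitivity (\sum_(i < d) (i == x)%:R * \sum_(j < d) (j == y)%:R *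
   ((z == j) && (w == i))%:R :> C).
  apply: eq_bigr => i _; rewrite summxE mulr_sumr; apply: eq_bigr => j _.
  rewrite tensmxE !mxE [i == x]eq_sym [j == y]eq_sym.
  by case: (x == i); case: (y == j); case: (z == j); case: (w == i);
    rewrite /= ?mulr1 ?mulr0 ?mul1r ?mul0r.
rewrite sum_delta (@sum_delta (fun j => ((z == j) && (w == x))%:R)).
by rewrite eq_sym [w == x]eq_sym andbC.
Qed.

Definition diag_idx (r : 'I_(d * d)) : bool :=
  (mxtens_unindex r).1 == (mxtens_unindex r).2.

Lemma diag_idx_kidx x y : diag_idx (kidx x y) = (x == y).
Proof. by rewrite /diag_idx /kidx mxtens_indexK. Qed.

Lemma sum_diag_idx : \sum_r (diag_idx r)%:R = d%:R :> C.
Proof.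
rewrite sum_kidx.
under eq_bigr => i _ do (under eq_bigr => j _ do
  rewrite diag_idx_kidx eq_sym -[(_)%:R]mulr1; rewrite (@sum_delta (fun _ => 1))).
by rewrite sumr_const card_ord.
Qed.

Definition maxEnt_row : 'rV[C]_(d * d) := \row_r (diag_idx r)%:R.
Definition maxEnt : 'M[C]_(d * d) := \matrix_(r, s) (diag_idx r && diag_idx s)%:R.

(* F^{T_A} = maxEnt, so rho_W^{T_A} is a combination of 1 and maxEnt *)
Lemma werner_ptA (alpha : R) :
  let c1 := (alpha%:C)%C / ('C(d.+1, 2))%:R in
  let c2 := ((1 - alpha)%:C)%C / ('C(d, 2))%:R in
  ptA (werner d alpha) = ((c1 + c2) / 2) *: 1%:M + ((c1 - c2) / 2) *: maxEnt.
Proof.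
move=> c1 c2; apply/matrixP => r s.
case: (@mxtens_indexP d d r) => x y; case: (@mxtens_indexP d d s) => z w.
rewrite -/(kidx x y) -/(kidx z w) ptA_entry.
rewrite /werner /PiPlus /PiMinus !mxE swap_entry !kidx_eq !diag_idx_kidx -/c1 -/c2.
rewrite [z == x]eq_sym [z == w]eq_sym [y == x]eq_sym [andb (x == y) _]andbC.
ring.
Qed.

Lemma maxEnt_rowE : maxEnt_row *m maxEnt = d%:R *: maxEnt_row.
Proof.
apply/matrixP => i s; rewrite !mxE.
under eq_bigr => t _ do rewrite !mxE.
transitivity (\sum_(t : 'I_(d * d)) (diag_idx s)%:R * (diag_idx t)%:R : C).
  by apply: eq_bigr => t _; case: (diag_idx s); case: (diag_idx t);
    rewrite /= ?mulr1 ?mulr0 ?mul1r ?mul0r.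
by rewrite -mulr_sumr sum_diag_idx mulrC.
Qed.

Lemma maxEnt_sqr : maxEnt *m maxEnt = d%:R *: maxEnt.
Proof.
apply/matrixP => r s; rewrite !mxE.
under eq_bigr => t _ do rewrite !mxE.
transitivity (\sum_t (diag_idx r && diag_idx s)%:R * (diag_idx t)%:R : C).
  by apply: eq_bigr => t _; case: (diag_idx r); case: (diag_idx s);
    case: (diag_idx t); rewrite /= ?mulr1 ?mulr0 ?mul1r ?mul0r.
by rewrite -mulr_sumr sum_diag_idx mulrC.
Qed.

Lemma maxEnt_tr : \tr maxEnt = d%:R.
Proof. by rewrite /mxtrace -sum_diag_idx; apply: eq_bigr => r _; rewrite mxE andbb. Qed.

Hypothesis d_gt0 : (0 < d)%N.

Definition Qent : 'M[C]_(d * d) := (d%:R)^-1 *: maxEnt.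

Lemma natd_neq0 : (d%:R : C) != 0.
Proof. by rewrite pnatr_eq0 -lt0n. Qed.

Lemma Qent_idem : Qent *m Qent = Qent.
Proof.
rewrite /Qent -scalemxAl -scalemxAr maxEnt_sqr !scalerA -mulrA mulVf ?natd_neq0 //.
by rewrite mulr1.
Qed.

Lemma Qent_tr : \tr Qent = 1.
Proof. by rewrite /Qent mxtraceZ maxEnt_tr mulVf ?natd_neq0. Qed.

Lemma maxEnt_row_fixed : maxEnt_row *m Qent = maxEnt_row.
Proof.
by rewrite /Qent -scalemxAr maxEnt_rowE scalerA mulVf ?natd_neq0 ?scale1r.
Qed.

Lemma maxEnt_row_neq0 : maxEnt_row != 0.
Proof.
apply/negP => /eqP h; pose o := Ordinal d_gt0.
have := congr1 (fun u : 'rV[C]_(d * d) => u 0 (kidx o o)) h.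
by rewrite /= !mxE diag_idx_kidx eqxx => /eqP; rewrite oner_eq0.
Qed.

Lemma scalar_maxEnt_split (A B : C) :
  A *: 1%:M + B *: maxEnt = split_mx Qent A (A + B * d%:R).
Proof.
rewrite /split_mx /Qent scalerBr scalerDl !scalerA -mulrA mulfV ?natd_neq0 //.
by rewrite mulr1 addrA subrK.
Qed.

Lemma split_Qent_tr (A X : C) :
  \tr (split_mx Qent A X) = A * ((d * d)%:R - 1) + X.
Proof.
have trQc : \tr (1%:M - Qent) = (d * d)%:R - 1.
  by rewrite raddfB /= mxtrace1 Qent_tr.
by rewrite /split_mx mxtraceD (mxtraceZ A) (mxtraceZ X) trQc Qent_tr mulr1.
Qed.

End ProductBasis.

Lemma moment_gap (R : realFieldType) (m a x : R) :
  0 < m -> 0 <= a -> a * m + x = 1 ->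
  (a ^+ 3 * m + x ^+ 3 < (a ^+ 2 * m + x ^+ 2) ^+ 2) <-> (x < 0).
Proof.
move=> m_gt0 a_ge0 trace1.
have gapE : (a ^+ 2 * m + x ^+ 2) ^+ 2 - (a ^+ 3 * m + x ^+ 3)
    = (m * a) * (- x) * (a - x) ^+ 2.
  by rewrite -[X in _ - X = _]mulr1 -trace1; ring.
rewrite -subr_gt0 gapE; split => [gap_gt0 | x_lt0].
  rewrite ltNge; apply/negP => x_ge0.
  have : 0 <= (m * a) * x * (a - x) ^+ 2.
    by rewrite mulr_ge0 ?sqr_ge0 // !mulr_ge0 // ltW.
  nra.
have ma_gt0 : 0 < m * a by nra.
have sq_gt0 : 0 < (a - x) ^+ 2 by rewrite exprn_gt0 // subr_gt0; lra.
by rewrite mulr_gt0 // mulr_gt0 // oppr_gt0.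
Qed.

Lemma bin2_nat n : ('C(n, 2) * 2 = n * n.-1)%N.
Proof.
elim: n => [//|n IH]; rewrite binS bin1 mulnDl IH; case: n {IH} => [//|n] /=; lia.
Qed.

Lemma bin2R (R : numFieldType) n : (1 <= n)%N ->
  ('C(n, 2))%:R = (n%:R * (n%:R - 1)) / 2 :> R.
Proof.
move=> n_ge1; apply: (mulIf (x := 2)); first by rewrite pnatr_eq0.
rewrite mulfVK ?pnatr_eq0 // -natrM bin2_nat -(prednK n_ge1) /= natrM.
by rewrite -addn1 natrD addrK.
Qed.

Section WernerCoefficients.
Variables (R : rcfType) (d : nat) (alpha : R).
Hypothesis d_ge2 : (2 <= d)%N.
Hypothesis alpha01 : 0 <= alpha <= 1.

Definition c_plus : R := alpha / ('C(d.+1, 2))%:R.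
Definition c_minus : R := (1 - alpha) / ('C(d, 2))%:R.
Definition coef_a : R := (c_plus + c_minus) / 2.
Definition coef_b : R := (c_plus - c_minus) / 2.
Definition coef_x : R := coef_a + coef_b * d%:R.

Let dR := (d%:R : R).

Lemma natd_ge2 : 2 <= dR.
Proof. by rewrite /dR ler_nat. Qed.

Lemma c_plusE : c_plus = 2 * alpha / (dR * (dR + 1)).
Proof.
rewrite /c_plus bin2R // -addn1 natrD addrK -/dR.
have := natd_ge2 => d2; field.
by rewrite -!(eq_sym 0) !lt_eqF //; lra.
Qed.

Lemma c_minusE : c_minus = 2 * (1 - alpha) / (dR * (dR - 1)).
Proof.
rewrite /c_minus bin2R ?(leq_trans _ d_ge2) // -/dR.
have := natd_ge2 => d2; field.
by rewrite -!(eq_sym 0) !lt_eqF //; lra.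
Qed.

Lemma coef_xE : coef_x = (2 * alpha - 1) / dR.
Proof.
rewrite /coef_x /coef_a /coef_b c_plusE c_minusE -/dR.
have := natd_ge2 => d2; field.
by rewrite -!(eq_sym 0) !lt_eqF //; lra.
Qed.

Lemma coef_trace : coef_a * (dR * dR - 1) + coef_x = 1.
Proof.
rewrite coef_xE /coef_a c_plusE c_minusE.
have := natd_ge2 => d2; field.
by rewrite -!(eq_sym 0) !lt_eqF //; lra.
Qed.

Lemma coef_a_ge0 : 0 <= coef_a.
Proof.
rewrite /coef_a c_plusE c_minusE; have := natd_ge2 => d2; case/andP: alpha01 => a0 a1.
by rewrite divr_ge0 // addr_ge0 // divr_ge0 // ?mulr_ge0 //; lra.
Qed.

Lemma coef_x_lt0 : coef_x < 0 <-> alpha < 2^-1.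
Proof.
have d_gt0 : 0 < dR by have := natd_ge2; lra.
by rewrite coef_xE pmulr_llt0 ?invr_gt0 //; split => h; lra.
Qed.

End WernerCoefficients.

Section WernerPartialTranspose.
Variables (R : rcfType) (d : nat) (alpha : R).
Hypothesis d_ge2 : (2 <= d)%N.
Local Notation a := (coef_a d alpha).
Local Notation x := (coef_x d alpha).

Let d_gt0 : (0 < d)%N := ltnW d_ge2.

Local Notation toC := (real_complex R).

Let natC n : (n%:R : R[i]) = toC n%:R.
Proof. by rewrite rmorph_nat. Qed.

Lemma werner_ptA_split :
  ptA (werner d alpha) = split_mx (Qent R d) (a%:C)%C (x%:C)%C.
Proof.
rewrite werner_ptA /= (scalar_maxEnt_split d_gt0).
rewrite /coef_x /coef_a /coef_b /c_plus /c_minus.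
rewrite (natC 2) (natC 'C(d.+1, 2)) (natC 'C(d, 2)) (natC d).
by congr split_mx; rewrite !(rmorphM toC, rmorphD toC, rmorphN toC, fmorphV toC).
Qed.

Lemma pmoment_werner n :
  pmoment (werner d alpha) n = (a ^+ n * (d%:R * d%:R - 1) + x ^+ n)%:C%C.
Proof.
rewrite /pmoment werner_ptA_split (split_mx_pow (Qent_idem R d_gt0)).
rewrite (split_Qent_tr d_gt0) natrM (natC d); move: a x => a0 x0.
by rewrite !(rmorphM toC, rmorphD toC, rmorphN toC, rmorphXn toC, rmorph1 toC).
Qed.

Lemma werner_ptA_negative_eigenvalue : 0 <= alpha <= 1 ->
  x < 0 <-> exists lambda : R[i],
    eigenvalue (ptA (werner d alpha)) lambda /\ lambda < 0.
Proof.
move=> alpha01; rewrite werner_ptA_split; split => [x_lt0 | [lam [lam_eig lam_lt0]]].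
  exists (x%:C)%C; split; last by rewrite ltcR.
  exact: split_mx_eigenvalue_fixed (maxEnt_row_neq0 R d_gt0) (maxEnt_row_fixed R d_gt0).
have [lam_a | lam_x] := split_mx_eigenvalue (Qent_idem R d_gt0) lam_eig.
  by move: lam_lt0; rewrite lam_a ltcR ltNge coef_a_ge0.
by move: lam_lt0; rewrite lam_x ltcR.
Qed.

End WernerPartialTranspose.

Theorem mainTheorem4 (R : rcfType) (d : nat) (alpha : R) :
  (2 <= d)%N -> 0 <= alpha <= 1 ->
  (pmoment (werner d alpha) 3 < pmoment (werner d alpha) 2 ^+ 2
     <-> alpha < 2^-1) /\
  (alpha < 2^-1 <->
     exists lambda : R[i], eigenvalue (ptA (werner d alpha)) lambda /\ lambda < 0).
Proof.
move=> d_ge2 alpha01; rewrite -(coef_x_lt0 alpha d_ge2); split.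
  rewrite !(pmoment_werner alpha d_ge2) -rmorphXn ltcR.
  apply: moment_gap; last exact: coef_trace.
  - by have := natd_ge2 R d_ge2; nra.
  - exact: coef_a_ge0.
exact: werner_ptA_negative_eigenvalue.
Qed.
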